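(* Let $\theta\in\mathbb{R}\setminus\pi\mathbb{Q}$, $\mu\in\mathbb{C}\setminus\{0,1\}$ and $a,b\in\mathbb{C}^n$ with $a\neq b$. If $G$ is the group generated by $f=(a,e^{i\theta})$ and $g=(b,\mu)$, then $\overline{G(a)}=\mathbb{C}(b-a)+a=\{a+t(b-a):t\in\mathbb{C}\}$.
   Context: For $c\in\mathbb{C}^n$ and $\nu\in\mathbb{C}\setminus\{0,1\}$, $(c,\nu)$ denotes the map $z\mapsto\nu(z-c)+c$ of $\mathbb{C}^n$. $G(z)=\{h(z):h\in G\}$. *)

From Stdlib Require Import Reals Lra.
From Stdlib Require Vectors.Fin.
Open Scope R_scope.

(* The complex numbers Cplx = R x R (named to avoid clash with Reals binomial C). *)
Definition Cplx : Type := (R * R)%type.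
Definition Cplx0 : Cplx := (0, 0).
Definition Cplx1 : Cplx := (1, 0).
Definition Cadd (z w : Cplx) : Cplx := (fst z + fst w, snd z + snd w).
Definition Copp (z : Cplx) : Cplx := (- fst z, - snd z).
Definition Csub (z w : Cplx) : Cplx := Cadd z (Copp w).
Definition Cmul (z w : Cplx) : Cplx :=
  (fst z * fst w - snd z * snd w, fst z * snd w + snd z * fst w).
Definition Cinv (z : Cplx) : Cplx :=
  (fst z / (fst z ^ 2 + snd z ^ 2), - snd z / (fst z ^ 2 + snd z ^ 2)).
Definition Cmod (z : Cplx) : R := sqrt (fst z ^ 2 + snd z ^ 2).
Definition Cexpi (theta : R) : Cplx := (cos theta, sin theta).

Definition Cn (n : nat) : Type := Fin.t n -> Cplx.
Definition vadd {n} (u v : Cn n) : Cn n := fun i => Cadd (u i) (v i).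
Definition vsub {n} (u v : Cn n) : Cn n := fun i => Csub (u i) (v i).
Definition vscal {n} (t : Cplx) (v : Cn n) : Cn n := fun i => Cmul t (v i).

(* The map (c, nu) : z |-> nu (z - c) + c of Cplx^n. *)
Definition homothety {n} (c : Cn n) (nu : Cplx) (z : Cn n) : Cn n :=
  vadd (vscal nu (vsub z c)) c.

(* The group generated by (c1,nu1) and (c2,nu2): all finite compositions of
   the generators and their inverses (c,nu)^{-1} = (c,nu^{-1}). *)
Inductive gen_group {n} (c1 : Cn n) (nu1 : Cplx) (c2 : Cn n) (nu2 : Cplx)
  : (Cn n -> Cn n) -> Prop :=
| gg_id : gen_group c1 nu1 c2 nu2 (fun z => z)
| gg_f : forall h, gen_group c1 nu1 c2 nu2 h ->
    gen_group c1 nu1 c2 nu2 (fun z => homothety c1 nu1 (h z))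
| gg_finv : forall h, gen_group c1 nu1 c2 nu2 h ->
    gen_group c1 nu1 c2 nu2 (fun z => homothety c1 (Cinv nu1) (h z))
| gg_g : forall h, gen_group c1 nu1 c2 nu2 h ->
    gen_group c1 nu1 c2 nu2 (fun z => homothety c2 nu2 (h z))
| gg_ginv : forall h, gen_group c1 nu1 c2 nu2 h ->
    gen_group c1 nu1 c2 nu2 (fun z => homothety c2 (Cinv nu2) (h z)).

Definition orbit {n} (G : (Cn n -> Cn n) -> Prop) (z : Cn n) : Cn n -> Prop :=
  fun w => exists h, G h /\ w = h z.

(* Topological closure in Cplx^n (product topology, via sup-norm balls). *)
Definition closure {n} (S : Cn n -> Prop) : Cn n -> Prop :=
  fun z => forall eps, 0 < eps ->
    exists w, S w /\ forall i, Cmod (Csub (z i) (w i)) < eps.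

Definition not_in_piQ (theta : R) : Prop :=
  forall p q : Z, q <> 0%Z -> theta * IZR q <> PI * IZR p.

(* The orbit of a lies on the complex line through a and b, on which f and g act, in
   the parameter t of a + t(b - a), as t |-> e^{i theta} t and t |-> mu (t - 1) + 1.
   Since g (e^{i theta} s + v) = e^{i theta} g (s) for v = (e^{i theta} - 1)(1 - mu)/mu, the set
   of parameters is invariant under translation by v, hence by e^{ik theta} v for all k.
   By Dirichlet's approximation theorem some e^{iq theta} is close to, but different from,
   1, so w = (e^{iq theta} - 1) v and e^{i theta} w are small, R-linearly independent
   periods, and the lattice they span is eps-dense in C.  Conversely the line is closed. *)
From Stdlib Require Import Reals Lra Lia ZArith Field.
From Stdlib Require Import FunctionalExtensionality Classical.
From Coquelicot Require Complex.
Open Scope R_scope.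

(* [Cplx] and its operations are definitionally those of Coquelicot's [Complex.C],
   so Coquelicot's lemmas apply by conversion. *)
Definition Cdiv (z w : Cplx) : Cplx := Cmul z (Cinv w).

Lemma Cplx_field : field_theory Cplx0 Cplx1 Cadd Cmul Csub Copp Cdiv Cinv (@eq Cplx).
Proof. exact Complex.C_field_theory. Qed.

Add Field Cplx_field_tac : Cplx_field.

Lemma Cmod_mul (z w : Cplx) : Cmod (Cmul z w) = Cmod z * Cmod w.
Proof. exact (Complex.Cmod_mult z w). Qed.

Lemma Cmod_triangle (z w : Cplx) : Cmod (Cadd z w) <= Cmod z + Cmod w.
Proof. exact (Complex.Cmod_triangle z w). Qed.

Lemma Cmod_ge_0 (z : Cplx) : 0 <= Cmod z.
Proof. exact (Complex.Cmod_ge_0 z). Qed.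

Lemma Cmod_R (r : R) : Cmod (r, 0) = Rabs r.
Proof. exact (Complex.Cmod_R r). Qed.

Lemma Cmod_gt_0 (z : Cplx) : z <> Cplx0 -> 0 < Cmod z.
Proof. exact (proj1 (Complex.Cmod_gt_0 z)). Qed.

Lemma Cmod_eq_0 (z : Cplx) : Cmod z = 0 -> z = Cplx0.
Proof. exact (Complex.Cmod_eq_0 z). Qed.

Lemma Cmod_opp (z : Cplx) : Cmod (Copp z) = Cmod z.
Proof. exact (Complex.Cmod_opp z). Qed.

Lemma Cmod_div (z w : Cplx) : w <> Cplx0 -> Cmod (Cdiv z w) = Cmod z / Cmod w.
Proof. exact (Complex.Cmod_div z w). Qed.

Lemma Cmul_neq0 (z w : Cplx) : z <> Cplx0 -> w <> Cplx0 -> Cmul z w <> Cplx0.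
Proof. exact (Complex.Cmult_neq_0 z w). Qed.

Lemma Csub_eq_0 (z w : Cplx) : Csub z w = Cplx0 -> z = w.
Proof. intro E; transitivity (Cadd (Csub z w) w); [ring | rewrite E; ring]. Qed.

Lemma Cexpi_add (x y : R) : Cexpi (x + y) = Cmul (Cexpi x) (Cexpi y).
Proof.
  unfold Cexpi, Cmul; simpl; rewrite cos_plus, sin_plus; f_equal; ring.
Qed.

Lemma Cexpi_2PI_mul (p : Z) : Cexpi (2 * PI * IZR p) = Cplx1.
Proof.
  assert (Hsin : forall k : Z, sin (IZR k * PI) = 0)
    by (intro k; apply sin_eq_0_1; now exists k).
  unfold Cexpi, Cplx1; f_equal.
  - replace (2 * PI * IZR p) with (2 * (IZR p * PI)) by ring.
    rewrite cos_2a_sin, Hsin; ring.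
  - replace (2 * PI * IZR p) with (IZR (2 * p) * PI) by (rewrite mult_IZR; ring).
    apply Hsin.
Qed.

Lemma Cmod_Cexpi (x : R) : Cmod (Cexpi x) = 1.
Proof.
  unfold Cmod, Cexpi; cbn [fst snd].
  pose proof (sin2_cos2 x) as H; unfold Rsqr in H.
  replace (cos x ^ 2 + sin x ^ 2) with 1 by (rewrite <- H; ring).
  apply sqrt_1.
Qed.

Lemma Rabs_sin_le (x : R) : Rabs (sin x) <= Rabs x.
Proof.
  assert (Hpos : forall y, 0 < y -> Rabs (sin y) <= y).
  { intros y Hy; pose proof (sin_lt_x y Hy); pose proof PI2_1.
    destruct (Rlt_or_le y 1) as [Hy1 | Hy1].
    - rewrite Rabs_pos_eq; [lra |].
      left; apply sin_gt_0; lra.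
    - pose proof (SIN_bound y); apply Rabs_le; lra. }
  destruct (Rtotal_order x 0) as [Hx | [-> | Hx]].
  - rewrite <- (Ropp_involutive x), sin_neg, !Rabs_Ropp, (Rabs_left x) by lra.
    apply Hpos; lra.
  - rewrite sin_0; lra.
  - rewrite (Rabs_pos_eq x) by lra; auto.
Qed.

(* The chord |e^{ix} - 1| = 2 |sin (x/2)| is shorter than the arc. *)
Lemma Cmod_Cexpi_sub1 (x : R) : Cmod (Csub (Cexpi x) Cplx1) <= Rabs x.
Proof.
  rewrite <- sqrt_Rsqr_abs; apply sqrt_le_1_alt.
  unfold Csub, Cadd, Copp, Cexpi, Cplx1, Rsqr; simpl.
  pose proof (sin2_cos2 x) as H1; unfold Rsqr in H1.
  pose proof (cos_2a_sin (x / 2)) as H2; replace (2 * (x / 2)) with x in H2 by field.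
  pose proof (Rsqr_le_abs_1 _ _ (Rabs_sin_le (x / 2))) as H3; unfold Rsqr in H3.
  nra.
Qed.

Lemma Cexpi_neq0 (x : R) : Cexpi x <> Cplx0.
Proof.
  intro E; pose proof (Cmod_Cexpi x) as H; rewrite E in H.
  unfold Cmod, Cplx0 in H; simpl in H; rewrite Rmult_0_l, Rplus_0_l, sqrt_0 in H; lra.
Qed.

Lemma Cexpi_sub1_neq0 (x : R) : sin x <> 0 -> Csub (Cexpi x) Cplx1 <> Cplx0.
Proof.
  intros Hx E; apply Hx; apply (f_equal snd) in E.
  unfold Csub, Cadd, Copp, Cexpi, Cplx1, Cplx0 in E; simpl in E; lra.
Qed.

Lemma sin_mul_neq0 (theta : R) (q : nat) :
  not_in_piQ theta -> (1 <= q)%nat -> sin (INR q * theta) <> 0.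
Proof.
  intros Htheta Hq E; destruct (sin_eq_0_0 _ E) as [k Hk].
  apply (Htheta k (Z.of_nat q)); [lia |].
  rewrite <- INR_IZR_INZ; lra.
Qed.

Lemma pigeonhole (N : nat) (f : nat -> nat) :
  (forall i, (i <= N)%nat -> (f i < N)%nat) ->
  exists i j, (i < j <= N)%nat /\ f i = f j.
Proof.
  revert f; induction N as [|N IH]; intros f Hf.
  - specialize (Hf 0%nat (le_n 0)); lia.
  - destruct (classic (exists i, (i <= N)%nat /\ f i = f (S N))) as [[i [Hi E]] | Hnew].
    { exists i, (S N); split; [lia | auto]. }
    assert (Hne : forall i, (i <= N)%nat -> f i <> f (S N)) by eauto.
    (* Close the gap left by the value f (S N) and recurse on 0..N. *)
    set (g i := if Nat.ltb (f i) (f (S N)) then f i else pred (f i)).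
    destruct (IH g) as [i [j [Hij E]]].
    + intros i Hi; unfold g.
      pose proof (Hf i ltac:(lia)); pose proof (Hf (S N) ltac:(lia)); pose proof (Hne i Hi).
      destruct (Nat.ltb_spec (f i) (f (S N))); lia.
    + exists i, j; split; [lia |]; unfold g in E.
      pose proof (Hne i ltac:(lia)); pose proof (Hne j ltac:(lia)).
      destruct (Nat.ltb_spec (f i) (f (S N))), (Nat.ltb_spec (f j) (f (S N))); lia.
Qed.

Lemma Int_part_bounds (r : R) : IZR (Int_part r) <= r < IZR (Int_part r) + 1.
Proof. destruct (base_Int_part r); lra. Qed.

Lemma frac_bounds (r : R) : 0 <= r - IZR (Int_part r) < 1.
Proof. pose proof (Int_part_bounds r); lra. Qed.

Lemma Int_part_eq_dist (r s : R) : Int_part r = Int_part s -> Rabs (r - s) < 1.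
Proof.
  intro E; pose proof (Int_part_bounds r); pose proof (Int_part_bounds s).
  rewrite E in *; apply Rabs_def1; lra.
Qed.

Lemma Int_part_lt (r : R) (N : nat) : 0 <= r < INR N -> (0 <= Int_part r < Z.of_nat N)%Z.
Proof.
  intro Hr; pose proof (Int_part_bounds r); rewrite INR_IZR_INZ in Hr.
  split.
  - enough (-1 < Int_part r)%Z by lia. apply lt_IZR; lra.
  - apply lt_IZR; lra.
Qed.

(* Dirichlet: among the N + 1 fractional parts of 0, x, ..., N x two fall into the same
   interval [k/N, (k+1)/N). *)
Lemma dirichlet_approx (x : R) (N : nat) : (1 <= N)%nat ->
  exists (q : nat) (p : Z), (1 <= q)%nat /\ Rabs (INR q * x - IZR p) < / INR N.
Proof.
  intro HN.
  assert (HNpos : 0 < INR N) by (apply lt_0_INR; lia).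
  set (fr k := INR k * x - IZR (Int_part (INR k * x))).
  set (bin k := Int_part (INR N * fr k)).
  assert (Hbin : forall k, (0 <= bin k < Z.of_nat N)%Z).
  { intro k; apply Int_part_lt.
    pose proof (frac_bounds (INR k * x)); fold (fr k) in *; nra. }
  destruct (pigeonhole N (fun k => Z.to_nat (bin k))) as [i [j [Hij E]]].
  { intros k _; specialize (Hbin k); lia. }
  assert (Hclose : Rabs (INR N * fr j - INR N * fr i) < 1).
  { apply Int_part_eq_dist; pose proof (Hbin i); pose proof (Hbin j); fold (bin i) (bin j); lia. }
  exists (j - i)%nat, (Int_part (INR j * x) - Int_part (INR i * x))%Z; split; [lia |].
  replace (INR (j - i) * x - IZR (Int_part (INR j * x) - Int_part (INR i * x)))
    with (fr j - fr i) by (rewrite minus_INR, minus_IZR by lia; unfold fr; ring).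
  rewrite <- Rmult_minus_distr_l, Rabs_mult, Rabs_pos_eq in Hclose by lra.
  apply (Rmult_lt_reg_l (INR N)); [lra |].
  rewrite Rinv_r; lra.
Qed.

Lemma Cexpi_near_one (theta eta : R) : 0 < eta ->
  exists q : nat, (1 <= q)%nat /\ Cmod (Csub (Cexpi (INR q * theta)) Cplx1) < eta.
Proof.
  intro Heta; pose proof PI_RGT_0.
  destruct (INR_unbounded (2 * PI / eta)) as [N HN].
  assert (H2PI : 2 * PI < INR N * eta).
  { apply (Rmult_lt_compat_r eta) in HN; [| lra].
    unfold Rdiv in HN; rewrite Rmult_assoc, Rinv_l in HN; lra. }
  assert (HN1 : (1 <= N)%nat).
  { destruct N; [simpl in H2PI; lra | lia]. }
  assert (HNpos : 0 < INR N) by (apply lt_0_INR; lia).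
  destruct (dirichlet_approx (theta / (2 * PI)) N HN1) as [q [p [Hq Hqp]]].
  exists q; split; [exact Hq |].
  set (phi := INR q * theta - 2 * PI * IZR p).
  replace (INR q * theta) with (phi + 2 * PI * IZR p) by (unfold phi; ring).
  rewrite Cexpi_add, Cexpi_2PI_mul.
  replace (Cmul (Cexpi phi) Cplx1) with (Cexpi phi) by field.
  eapply Rle_lt_trans; [apply Cmod_Cexpi_sub1 |].
  replace phi with (2 * PI * (INR q * (theta / (2 * PI)) - IZR p)) by (unfold phi; field; lra).
  rewrite Rabs_mult, (Rabs_pos_eq (2 * PI)) by lra.
  apply Rlt_le_trans with (2 * PI * / INR N).
  - apply Rmult_lt_compat_l; lra.
  - apply (Rmult_le_reg_l (INR N)); [lra |].
    rewrite <- Rmult_assoc, (Rmult_comm (INR N)), Rmult_assoc, Rinv_r; lra.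
Qed.

Definition is_period (S : Cplx -> Prop) (x : Cplx) : Prop :=
  forall t, S (Cadd t x) <-> S t.

Section Periods.
Variable S : Cplx -> Prop.

Lemma is_period_add (x y : Cplx) :
  is_period S x -> is_period S y -> is_period S (Cadd x y).
Proof.
  intros Hx Hy t; rewrite <- (Hx t), <- (Hy (Cadd t x)).
  replace (Cadd (Cadd t x) y) with (Cadd t (Cadd x y)) by ring; reflexivity.
Qed.

Lemma is_period_opp (x : Cplx) : is_period S x -> is_period S (Copp x).
Proof.
  intros Hx t; rewrite <- (Hx (Cadd t (Copp x))).
  replace (Cadd (Cadd t (Copp x)) x) with t by ring; reflexivity.
Qed.

Lemma is_period_zmul (x : Cplx) (k : Z) : is_period S x -> is_period S (Cmul (IZR k, 0) x).
Proof.
  intro Hx; induction k as [| k IH | k IH] using Z.peano_ind.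
  - intro t; replace (Cadd t (Cmul (IZR 0, 0) x)) with t; [reflexivity |].
    destruct t, x; unfold Cadd, Cmul; simpl; f_equal; ring.
  - replace (Cmul (IZR (Z.succ k), 0) x) with (Cadd (Cmul (IZR k, 0) x) x)
      by (rewrite succ_IZR; destruct x; unfold Cadd, Cmul; simpl; f_equal; ring).
    now apply is_period_add.
  - replace (Cmul (IZR (Z.pred k), 0) x) with (Cadd (Cmul (IZR k, 0) x) (Copp x))
      by (rewrite <- Z.sub_1_r, minus_IZR; destruct x;
          unfold Cadd, Copp, Cmul; simpl; f_equal; ring).
    now apply is_period_add, is_period_opp.
Qed.

Lemma is_period_mul (r x : Cplx) : r <> Cplx0 ->
  (forall t, S (Cmul r t) <-> S t) -> is_period S x -> is_period S (Cmul r x).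
Proof.
  intros Hr Hrot Hx t.
  replace (Cadd t (Cmul r x)) with (Cmul r (Cadd (Cmul (Cinv r) t) x)) by (field; exact Hr).
  rewrite Hrot, (Hx (Cmul (Cinv r) t)), <- (Hrot (Cmul (Cinv r) t)).
  replace (Cmul r (Cmul (Cinv r) t)) with t by (field; exact Hr).
  reflexivity.
Qed.

End Periods.

Lemma lattice_approx (w u t : Cplx) : fst w * snd u - snd w * fst u <> 0 ->
  exists A B : Z,
    Cmod (Csub t (Cadd (Cmul (IZR A, 0) w) (Cmul (IZR B, 0) u))) <= Cmod w + Cmod u.
Proof.
  intro Hdet.
  (* Cramer's rule for t = al w + be u over R. *)
  set (al := (fst t * snd u - snd t * fst u) / (fst w * snd u - snd w * fst u)).
  set (be := (fst w * snd t - snd w * fst t) / (fst w * snd u - snd w * fst u)).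
  exists (Int_part al), (Int_part be).
  replace (Csub t (Cadd (Cmul (IZR (Int_part al), 0) w) (Cmul (IZR (Int_part be), 0) u)))
    with (Cadd (Cmul (al - IZR (Int_part al), 0) w) (Cmul (be - IZR (Int_part be), 0) u)).
  2: { destruct t, w, u; unfold al, be, Csub, Cadd, Copp, Cmul in *; simpl in *.
       f_equal; field; exact Hdet. }
  pose proof (frac_bounds al); pose proof (frac_bounds be).
  eapply Rle_trans; [apply Cmod_triangle |].
  rewrite !Cmod_mul, !Cmod_R, !Rabs_pos_eq by lra.
  pose proof (Cmod_ge_0 w); pose proof (Cmod_ge_0 u); nra.
Qed.

Definition chom (c nu t : Cplx) : Cplx := Cadd (Cmul nu (Csub t c)) c.

Definition commutator_shift (om mu : Cplx) : Cplx :=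
  Cdiv (Cmul (Csub om Cplx1) (Csub Cplx1 mu)) mu.

Lemma chom_shift_rot (om mu s : Cplx) : mu <> Cplx0 ->
  chom Cplx1 mu (Cadd (Cmul om s) (commutator_shift om mu)) = Cmul om (chom Cplx1 mu s).
Proof. intro Hmu; unfold chom, commutator_shift, Cdiv; field; exact Hmu. Qed.

Section Density.
Variables (theta : R) (mu : Cplx) (S : Cplx -> Prop).
Hypotheses (Htheta : not_in_piQ theta) (Hmu0 : mu <> Cplx0) (Hmu1 : mu <> Cplx1).
Hypothesis S0 : S Cplx0.
Hypothesis S_rot : forall t, S (Cmul (Cexpi theta) t) <-> S t.
Hypothesis S_hom : forall t, S (chom Cplx1 mu t) <-> S t.

Let v := commutator_shift (Cexpi theta) mu.

Lemma sin_theta_neq0 : sin theta <> 0.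
Proof. rewrite <- (Rmult_1_l theta); exact (sin_mul_neq0 theta 1 Htheta (le_n 1)). Qed.

Lemma shift_neq0 : v <> Cplx0.
Proof.
  intro E.
  assert (Hmu1' : Csub Cplx1 mu <> Cplx0).
  { intro E'; apply Hmu1; transitivity (Csub Cplx1 (Csub Cplx1 mu)); [ring | rewrite E'; ring]. }
  apply (Cmul_neq0 _ _ (Cexpi_sub1_neq0 theta sin_theta_neq0) Hmu1').
  transitivity (Cmul v mu); [unfold v, commutator_shift, Cdiv; field; exact Hmu0 |].
  rewrite E; ring.
Qed.

Lemma is_period_shift : is_period S v.
Proof.
  intro t; pose proof (Cexpi_neq0 theta) as Hom.
  replace t with (Cmul (Cexpi theta) (Cmul (Cinv (Cexpi theta)) t)) by (field; exact Hom).
  rewrite <- (S_hom (Cadd _ v)); unfold v; rewrite chom_shift_rot by exact Hmu0.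
  rewrite !S_rot, S_hom; reflexivity.
Qed.

Lemma S_rot_pow (k : nat) (t : Cplx) : S (Cmul (Cexpi (INR k * theta)) t) <-> S t.
Proof.
  induction k as [| k IH].
  - replace (Cmul (Cexpi (INR 0 * theta)) t) with t; [reflexivity |].
    rewrite Rmult_0_l; unfold Cexpi; rewrite cos_0, sin_0.
    destruct t; unfold Cmul; simpl; f_equal; ring.
  - rewrite S_INR, Rmult_plus_distr_r, Rmult_1_l, Rplus_comm, Cexpi_add.
    replace (Cmul (Cmul (Cexpi theta) (Cexpi (INR k * theta))) t)
      with (Cmul (Cexpi theta) (Cmul (Cexpi (INR k * theta)) t)) by ring.
    rewrite S_rot; exact IH.
Qed.

Lemma dense_in_C (t : Cplx) (eps : R) : 0 < eps ->
  exists s, S s /\ Cmod (Csub t s) < eps.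
Proof.
  intro Heps.
  set (eta := eps / (2 * (Cmod v + 1))).
  assert (Heta : eta * (2 * (Cmod v + 1)) = eps)
    by (unfold eta; field; pose proof (Cmod_ge_0 v); lra).
  assert (Heta0 : 0 < eta) by (pose proof (Cmod_ge_0 v); nra).
  destruct (Cexpi_near_one theta eta Heta0) as [q [Hq Hclose]].
  set (e := Cexpi (INR q * theta)) in Hclose.
  set (w := Cmul (Csub e Cplx1) v).
  assert (Hw : is_period S w).
  { replace w with (Cadd (Cmul e v) (Copp v)) by (unfold w; ring).
    apply is_period_add, is_period_opp, is_period_shift.
    apply is_period_mul; [apply Cexpi_neq0 | apply S_rot_pow | apply is_period_shift]. }
  assert (Hw' : is_period S (Cmul (Cexpi theta) w))
    by (apply is_period_mul; [apply Cexpi_neq0 | exact S_rot | exact Hw]).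
  assert (Hw0 : w <> Cplx0)
    by (apply Cmul_neq0; [apply Cexpi_sub1_neq0, sin_mul_neq0 | apply shift_neq0]; assumption).
  (* w and e^{i theta} w are R-independent: their determinant is sin theta |w|^2. *)
  assert (Hdet : fst w * snd (Cmul (Cexpi theta) w) - snd w * fst (Cmul (Cexpi theta) w) <> 0).
  { assert (Hw2 : fst w ^ 2 + snd w ^ 2 <> 0).
    { intro E; apply Hw0; destruct w as [w1 w2]; simpl in E; unfold Cplx0; f_equal; nra. }
    replace (fst w * snd (Cmul (Cexpi theta) w) - snd w * fst (Cmul (Cexpi theta) w))
      with (sin theta * (fst w ^ 2 + snd w ^ 2)) by (unfold Cmul, Cexpi; simpl; ring).
    apply Rmult_integral_contrapositive; split; [exact sin_theta_neq0 | exact Hw2]. }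
  destruct (lattice_approx _ _ t Hdet) as [A [B Hlat]].
  set (s := Cadd (Cmul (IZR A, 0) w) (Cmul (IZR B, 0) (Cmul (Cexpi theta) w))) in Hlat.
  exists s; split; [| eapply Rle_lt_trans; [exact Hlat |]].
  - replace s with (Cadd Cplx0 s) by ring.
    apply (is_period_add _ _ _ (is_period_zmul _ _ A Hw) (is_period_zmul _ _ B Hw')), S0.
  - rewrite Cmod_mul, Cmod_Cexpi; unfold w; rewrite Cmod_mul.
    pose proof (Cmod_ge_0 (Csub e Cplx1)); pose proof (Cmod_ge_0 v); nra.
Qed.

End Density.

Definition line {n} (a b : Cn n) (t : Cplx) : Cn n := vadd (vscal t (vsub b a)) a.

Definition on_line {n} (a b : Cn n) (z : Cn n) : Prop := exists t, z = line a b t.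

Lemma line_0 {n} (a b : Cn n) : line a b Cplx0 = a.
Proof. apply functional_extensionality; intro i; unfold line, vadd, vscal, vsub; ring. Qed.

Lemma homothety_line_l {n} (a b : Cn n) (nu t : Cplx) :
  homothety a nu (line a b t) = line a b (Cmul nu t).
Proof.
  apply functional_extensionality; intro i.
  unfold homothety, line, vadd, vscal, vsub; ring.
Qed.

Lemma homothety_line_r {n} (a b : Cn n) (nu t : Cplx) :
  homothety b nu (line a b t) = line a b (chom Cplx1 nu t).
Proof.
  apply functional_extensionality; intro i.
  unfold homothety, line, chom, vadd, vscal, vsub; ring.
Qed.

Lemma orbit_on_line {n} (a b : Cn n) (om mu : Cplx) (z : Cn n) :
  orbit (gen_group a om b mu) a z -> on_line a b z.
Proof.
  intros [h [Hh ->]].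
  induction Hh as [| h _ [t E] | h _ [t E] | h _ [t E] | h _ [t E]];
    [exists Cplx0; now rewrite line_0 | ..]; rewrite E.
  - exists (Cmul om t); apply homothety_line_l.
  - exists (Cmul (Cinv om) t); apply homothety_line_l.
  - exists (chom Cplx1 mu t); apply homothety_line_r.
  - exists (chom Cplx1 (Cinv mu) t); apply homothety_line_r.
Qed.

Lemma orbit_compose {n} (G : (Cn n -> Cn n) -> Prop) (k : Cn n -> Cn n) (z w : Cn n) :
  (forall h, G h -> G (fun x => k (h x))) -> orbit G z w -> orbit G z (k w).
Proof. intros HG [h [Hh ->]]; exists (fun x => k (h x)); auto. Qed.

Definition line_params {n} (a b : Cn n) (om mu : Cplx) (t : Cplx) : Prop :=
  orbit (gen_group a om b mu) a (line a b t).

Section LineParams.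
Variables (n : nat) (a b : Cn n) (om mu : Cplx).
Hypotheses (Hom : om <> Cplx0) (Hmu : mu <> Cplx0).

Lemma line_params_0 : line_params a b om mu Cplx0.
Proof. exists (fun z => z); split; [constructor | now rewrite line_0]. Qed.

Lemma line_params_rot (t : Cplx) :
  line_params a b om mu (Cmul om t) <-> line_params a b om mu t.
Proof.
  unfold line_params; split; intro H.
  - apply (orbit_compose _ _ _ _ (@gg_finv n a om b mu)) in H.
    rewrite homothety_line_l in H.
    replace (Cmul (Cinv om) (Cmul om t)) with t in H by (field; exact Hom); exact H.
  - rewrite <- homothety_line_l; exact (orbit_compose _ _ _ _ (@gg_f n a om b mu) H).
Qed.

Lemma line_params_hom (t : Cplx) :
  line_params a b om mu (chom Cplx1 mu t) <-> line_params a b om mu t.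
Proof.
  unfold line_params; split; intro H.
  - apply (orbit_compose _ _ _ _ (@gg_ginv n a om b mu)) in H.
    rewrite homothety_line_r in H.
    replace (chom Cplx1 (Cinv mu) (chom Cplx1 mu t)) with t in H
      by (unfold chom; field; exact Hmu); exact H.
  - rewrite <- homothety_line_r; exact (orbit_compose _ _ _ _ (@gg_g n a om b mu) H).
Qed.

End LineParams.

Lemma closure_mono {n} (X Y : Cn n -> Prop) (z : Cn n) :
  (forall w, X w -> Y w) -> closure X z -> closure Y z.
Proof.
  intros HXY Hz eps Heps; destruct (Hz eps Heps) as [w [Hw Hzw]]; eauto.
Qed.

Lemma Fin_bounded {n} (g : Fin.t n -> R) : exists K, 0 <= K /\ forall i, g i <= K.
Proof.
  induction n as [| n IH].
  - exists 0; split; [lra |]; intro i; apply Fin.case0, i.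
  - destruct (IH (fun i => g (Fin.FS i))) as [K [HK0 HK]].
    exists (Rmax K (g Fin.F1)); split; [eapply Rle_trans; [exact HK0 | apply Rmax_l] |].
    intro i; apply (Fin.caseS' i (fun i => g i <= Rmax K (g Fin.F1))); [apply Rmax_r |].
    intro p; eapply Rle_trans; [apply HK | apply Rmax_l].
Qed.

Lemma closure_line_of_dense {n} (a b : Cn n) (P : Cplx -> Prop) (X : Cn n -> Prop) (t : Cplx) :
  (forall s, P s -> X (line a b s)) ->
  (forall eps, 0 < eps -> exists s, P s /\ Cmod (Csub t s) < eps) ->
  closure X (line a b t).
Proof.
  intros HPX Hdense eps Heps.
  destruct (Fin_bounded (fun i => Cmod (Csub (b i) (a i)))) as [K [HK0 HK]].
  destruct (Hdense (eps / (K + 1))) as [s [Hs Hts]]; [apply Rdiv_lt_0_compat; lra |].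
  exists (line a b s); split; [auto | intro i].
  replace (Csub (line a b t i) (line a b s i)) with (Cmul (Csub t s) (Csub (b i) (a i)))
    by (unfold line, vadd, vscal, vsub; ring).
  rewrite Cmod_mul; specialize (HK i); simpl in HK.
  assert (Hscale : eps / (K + 1) * (K + 1) = eps) by (field; lra).
  pose proof (Cmod_ge_0 (Csub t s)); pose proof (Cmod_ge_0 (Csub (b i) (a i))); nra.
Qed.

(* The candidate point of the line agrees with z in a coordinate i0 where a and b differ. *)
Lemma line_coord_dist {n} (a b z : Cn n) (i0 j : Fin.t n) (s : Cplx) :
  Csub (b i0) (a i0) <> Cplx0 ->
  Cmod (Csub (z j) (line a b (Cdiv (Csub (z i0) (a i0)) (Csub (b i0) (a i0))) j))
  <= Cmod (Csub (z j) (line a b s j))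
     + Cmod (Csub (z i0) (line a b s i0))
       * (Cmod (Csub (b j) (a j)) / Cmod (Csub (b i0) (a i0))).
Proof.
  intro Hd.
  replace (Csub (z j) (line a b (Cdiv (Csub (z i0) (a i0)) (Csub (b i0) (a i0))) j))
    with (Csub (Csub (z j) (line a b s j))
            (Cmul (Cdiv (Csub (z i0) (line a b s i0)) (Csub (b i0) (a i0))) (Csub (b j) (a j))))
    by (unfold line, vadd, vscal, vsub, Cdiv; field; exact Hd).
  eapply Rle_trans; [apply Cmod_triangle |].
  rewrite Cmod_opp, Cmod_mul, Cmod_div by exact Hd.
  apply Req_le; unfold Rdiv; ring.
Qed.

Lemma on_line_closed {n} (a b : Cn n) (z : Cn n) :
  a <> b -> closure (on_line a b) z -> on_line a b z.
Proof.
  intros Hab Hz.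
  destruct (not_all_ex_not _ _ (fun H => Hab (functional_extensionality _ _ H))) as [i0 Hi0].
  assert (Hd : Csub (b i0) (a i0) <> Cplx0) by (intro E; apply Hi0, eq_sym, Csub_eq_0, E).
  exists (Cdiv (Csub (z i0) (a i0)) (Csub (b i0) (a i0))).
  apply functional_extensionality; intro j; apply Csub_eq_0, Cmod_eq_0.
  apply Rle_antisym; [| apply Cmod_ge_0].
  set (r := Cmod (Csub (b j) (a j)) / Cmod (Csub (b i0) (a i0))).
  assert (Hr : 0 <= r)
    by (apply Rmult_le_pos; [apply Cmod_ge_0 | left; apply Rinv_0_lt_compat, Cmod_gt_0, Hd]).
  apply Rle_plus_epsilon; intros eps Heps.
  destruct (Hz (eps / (1 + r))) as [w [[s ->] Hzw]]; [apply Rdiv_lt_0_compat; lra |].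
  eapply Rle_trans; [apply (line_coord_dist _ _ _ i0 j s Hd) |]; fold r.
  assert (Hscale : eps / (1 + r) * (1 + r) = eps) by (field; lra).
  pose proof (Hzw j); pose proof (Hzw i0); nra.
Qed.

Theorem proposition3p2 (n : nat) (theta : R) (mu : Cplx) (a b : Cn n) :
  not_in_piQ theta -> mu <> Cplx0 -> mu <> Cplx1 -> a <> b ->
  forall z : Cn n,
    closure (orbit (gen_group a (Cexpi theta) b mu) a) z <->
    exists t : Cplx, z = vadd (vscal t (vsub b a)) a.
Proof.
  intros Htheta Hmu0 Hmu1 Hab z; split.
  - intro Hz; apply on_line_closed; [exact Hab |].
    exact (closure_mono _ _ _ (orbit_on_line a b _ mu) Hz).
  - intros [t ->].
    apply (closure_line_of_dense a b (line_params a b (Cexpi theta) mu)); [easy |].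
    intros eps Heps.
    apply (dense_in_C theta mu); auto using line_params_0, line_params_hom.
    apply line_params_rot, Cexpi_neq0.
Qed.
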